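(* Let $D$ be an integral domain. Then $t\text{-}\dim(D)\le t\text{-}\dim(D[X]_A)\le t\text{-}\dim(D[X])$.
   Context: $X$ is an indeterminate over $D$, $A=\{f\in D[X]\mid f(0)=1\}$, and $D[X]_A$ is the localization at $A$. For an integral domain $E$ with quotient field $K$ and a nonzero fractional ideal $I$, let $I^{-1}=\{x\in K\mid xI\subseteq E\}$, $I_v=(I^{-1})^{-1}$, and $I_t=\bigcup J_v$ where $J$ ranges over the nonzero finitely generated fractional ideals contained in $I$. An ideal $I$ is a $t$-ideal if $I_t=I$; a prime $t$-ideal is a prime ideal that is a $t$-ideal; a maximal $t$-ideal is maximal among proper $t$-ideals. The $t$-height of a prime $t$-ideal $P$ is the supremum of $n$ such that there is a chain $P=P_0\supsetneq P_1\supsetneq\cdots\supsetneq P_n=(0)$ of prime $t$-ideals (with $(0)$ at the bottom), and $t\text{-}\dim(E)=\sup\{t\text{-ht}(P)\mid P \text{ a maximal } t\text{-ideal of } E\}$. *)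

From HB Require Import structures.
From mathcomp Require Import all_boot all_algebra.
From mathcomp Require Import fraction.
Set Implicit Arguments. Unset Strict Implicit. Unset Printing Implicit Defensive.
Import GRing.Theory.
Local Open Scope ring_scope.

(* An integral domain E is represented as a subring E of its quotient
   field K (E : K -> Prop).  All ideals, fractional ideals, etc. are
   subsets of K. *)
Section TIdeals.
Variable K : fieldType.
Variable E : K -> Prop.

Definition subsetK (I J : K -> Prop) := forall x, I x -> J x.
Definition eqsetK (I J : K -> Prop) := forall x, I x <-> J x.

Definition Esubmodule (I : K -> Prop) :=
  I 0 /\ (forall x y, I x -> I y -> I (x + y)) /\
  (forall a x, E a -> I x -> I (a * x)).

Definition nonzero_set (I : K -> Prop) := exists x, I x /\ x != 0.

Definition frac_ideal (I : K -> Prop) :=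
  Esubmodule I /\ nonzero_set I /\
  exists d, E d /\ d != 0 /\ forall x, I x -> E (d * x).

Definition inv_ideal (I : K -> Prop) : K -> Prop :=
  fun x => forall y, I y -> E (x * y).

Definition v_ideal (I : K -> Prop) : K -> Prop := inv_ideal (inv_ideal I).

Definition span_of (s : seq K) : K -> Prop :=
  fun x => exists c : seq K, size c = size s /\ (forall i, (i < size c)%N -> E c`_i) /\
    x = \sum_(i < size s) c`_i * s`_i.

Definition fg_frac_ideal (J : K -> Prop) :=
  frac_ideal J /\ exists s : seq K, eqsetK J (span_of s).

Definition t_ideal_op (I : K -> Prop) : K -> Prop :=
  fun x => exists J, fg_frac_ideal J /\ subsetK J I /\ v_ideal J x.

Definition is_t_ideal (I : K -> Prop) := frac_ideal I /\ eqsetK (t_ideal_op I) I.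

Definition ideal (I : K -> Prop) := Esubmodule I /\ subsetK I E.

Definition proper (I : K -> Prop) := ~ I 1.

Definition prime_ideal (P : K -> Prop) :=
  ideal P /\ proper P /\
  forall a b, E a -> E b -> P (a * b) -> P a \/ P b.

Definition prime_t_ideal (P : K -> Prop) := prime_ideal P /\ is_t_ideal P.

Definition max_t_ideal (M : K -> Prop) :=
  ideal M /\ proper M /\ is_t_ideal M /\
  forall N, ideal N -> proper N -> is_t_ideal N -> subsetK M N -> eqsetK N M.

Definition zero_set : K -> Prop := fun x => x = 0.

Definition t_chain (P : K -> Prop) (n : nat) :=
  exists Q : nat -> (K -> Prop),
    Q 0%N = P /\ eqsetK (Q n) zero_set /\
    (forall i, (i < n)%N -> prime_t_ideal (Q i)) /\
    (forall i, (i < n)%N -> subsetK (Q i.+1) (Q i) /\ ~ subsetK (Q i) (Q i.+1)).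

(* "t-dim(E) >= n" : t-dim(E) = sup over maximal t-ideals P of t-ht(P),
   t-ht(P) = sup of lengths of chains; the sup of the empty set is 0. *)
Definition tdim_ge (n : nat) :=
  n = 0%N \/ exists M, max_t_ideal M /\ t_chain M n.

End TIdeals.

(* t-dim(E) <= t-dim(F), allowing infinite values *)
Definition tdim_le (K1 : fieldType) (E1 : K1 -> Prop)
  (K2 : fieldType) (E2 : K2 -> Prop) :=
  forall n : nat, tdim_ge E1 n -> tdim_ge E2 n.

Definition dom_in_frac (D : idomainType) : {fraction D} -> Prop :=
  fun x => exists a : D, x = FracField.tofrac a.

Definition polyring_in_frac (D : idomainType) : {fraction {poly D}} -> Prop :=
  fun x => exists f : {poly D}, x = FracField.tofrac f.

Definition setA (D : idomainType) (f : {poly D}) := f.[0] = 1.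

Definition polyloc_A (D : idomainType) : {fraction {poly D}} -> Prop :=
  fun x => exists f g : {poly D}, setA g /\
    x = FracField.tofrac f / FracField.tofrac g.

(* Both inequalities come from maps on prime t-ideals that preserve strict inclusion
   and send (0) to (0): the extension Q |-> Q D[X]_A for the first, the contraction
   Q |-> Q ∩ D[X] for the second.  Such a map carries a chain of prime t-ideals
   below a maximal t-ideal M to a chain whose top F(M) lies, by Zorn's lemma, in a
   maximal t-ideal, which is prime since (M : b) is again a t-ideal.

   Contraction preserves t-ideals because denominators from A can be cleared.  For
   extension, take generators f_i / g_i (g_i in A) of a finitely generated J inside
   Q D[X]_A and let I be the ideal of D generated by the coefficients of the f_i, so
   I <= Q.  If a / b inverts I, then (a / b) J <= D[X]_A; for h / g in J_v this gives
   a h g' = b r g with g'(0) = 1, so b divides every coefficient of a h.  Hence the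
   coefficients of h lie in I_v <= Q, i.e. h / g is in Q D[X]_A. *)

From Pilot Require Import Defs.
From mathcomp Require Import all_boot all_algebra fraction.
From mathcomp Require Import boolp classical_sets.
From Stdlib Require Import Classical.
From mathcomp Require Import zify.
Set Implicit Arguments. Unset Strict Implicit. Unset Printing Implicit Defensive.
Import GRing.Theory.
Local Open Scope ring_scope.

Section Subring.
Variables (K : fieldType) (E : K -> Prop).
Hypotheses (E0 : E 0) (E1 : E 1).
Hypothesis ED : forall x y, E x -> E y -> E (x + y).
Hypothesis EM : forall x y, E x -> E y -> E (x * y).

Definition proper_t_ideal (I : K -> Prop) := ideal E I /\ Defs.proper I /\ is_t_ideal E I.

Lemma span_of_nil x : span_of E [::] x <-> x = 0.
Proof.
split; first by case=> c [_ [_ ->]]; rewrite big_ord0.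
by move=> ->; exists [::]; split=> //; split=> //; rewrite big_ord0.
Qed.

Lemma span_of_cons a s x : span_of E (a :: s) x <->
  exists c w, E c /\ span_of E s w /\ x = c * a + w.
Proof.
split.
  case=> [[|c0 c] [sz [hc ->]]] //=.
  exists c0, (\sum_(i < size s) c`_i * s`_i); split; first exact: (hc 0%N).
  split; last by rewrite big_ord_recl.
  exists c; split; first by case: sz.
  by split=> // i hi; apply: (hc i.+1).
case=> c [w [hc [[cw [sz [hcw ->]]] ->]]].
exists (c :: cw); split; first by rewrite /= sz.
split; first by case=> [|i] //= hi; apply: hcw.
by rewrite /= big_ord_recl.
Qed.

Lemma span_of_ind (P : seq K -> K -> Prop) :
  P [::] 0 ->
  (forall a s c w, E c -> span_of E s w -> P s w -> P (a :: s) (c * a + w)) ->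
  forall s x, span_of E s x -> P s x.
Proof.
move=> P0 Pcons; elim=> [|a s IH] x; first by move/span_of_nil=> ->.
by case/span_of_cons=> c [w [hc [hw ->]]]; apply: Pcons => //; apply: IH.
Qed.

Lemma span_of0 s : span_of E s 0.
Proof.
elim: s => [|a s IH]; first exact/span_of_nil.
by apply/span_of_cons; exists 0, 0; rewrite mul0r addr0.
Qed.

Lemma span_of_mem s x : x \in s -> span_of E s x.
Proof.
elim: s => [|a s IH] //; rewrite inE => /orP [/eqP ->|hx].
  by apply/span_of_cons; exists 1, 0; rewrite mul1r addr0; split; [|split; first exact: span_of0].
by apply/span_of_cons; exists 0, x; rewrite mul0r add0r; split; [|split; first exact: IH].
Qed.

Lemma span_of_submodule s : Esubmodule E (span_of E s).
Proof.
split; first exact: span_of0.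
split.
  elim: s => [|a s IH] x y.
    by move=> /span_of_nil -> /span_of_nil ->; apply/span_of_nil; rewrite addr0.
  move=> /span_of_cons [c1 [w1 [h1 [hw1 ->]]]] /span_of_cons [c2 [w2 [h2 [hw2 ->]]]].
  apply/span_of_cons; exists (c1 + c2), (w1 + w2); split; first exact: ED.
  split; first exact: IH.
  by rewrite mulrDl -!addrA; congr (_ + _); rewrite addrCA.
move=> b; elim: s => [|a s IH] x hb.
  by move=> /span_of_nil ->; apply/span_of_nil; rewrite mulr0.
move=> /span_of_cons [c [w [hc [hw ->]]]].
apply/span_of_cons; exists (b * c), (b * w); split; first exact: EM.
by split; [exact: IH | rewrite mulrDr mulrA].
Qed.

Lemma span_of_min (I : K -> Prop) s : Esubmodule E I -> (forall x, x \in s -> I x) ->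
  subsetK (span_of E s) I.
Proof.
move=> [I0 [ID IM]] sI x hx; move: s x hx sI.
apply: (@span_of_ind (fun s x => (forall z, z \in s -> I z) -> I x)) => // a s c w hc _ IH sI.
apply: ID; first by apply: IM => //; apply: sI; exact: mem_head.
by apply: IH => z hz; apply: sI; rewrite inE hz orbT.
Qed.

Lemma span_of_mulr b s w : span_of E s w -> span_of E [seq u * b | u <- s] (w * b).
Proof.
move: s w; apply: (@span_of_ind (fun s w => span_of E [seq u * b | u <- s] (w * b))).
  by rewrite mul0r; apply: span_of0.
move=> a s c w hc _ IH /=; apply/span_of_cons; exists c, (w * b).
by rewrite mulrDl mulrA.
Qed.

Lemma inv_ideal_span (y : K) s : (forall x, x \in s -> E (y * x)) ->
  inv_ideal E (span_of E s) y.
Proof.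
move=> ys z hz; move: s z hz ys.
apply: (@span_of_ind (fun s z => (forall x, x \in s -> E (y * x)) -> E (y * z))).
  by rewrite mulr0.
move=> a s c w hc _ IH ys; rewrite mulrDr mulrCA; apply: ED.
  by apply: EM => //; apply: ys; exact: mem_head.
by apply: IH => u hu; apply: ys; rewrite inE hu orbT.
Qed.

Lemma sub_v_ideal (J : K -> Prop) : subsetK J (v_ideal E J).
Proof. by move=> x hx y hy; rewrite mulrC; apply: hy. Qed.

Lemma v_ideal_integral (J : K -> Prop) : subsetK J E -> subsetK (v_ideal E J) E.
Proof. by move=> JE x hx; rewrite -[x]mulr1; apply: hx => y hy; rewrite mul1r; apply: JE. Qed.

Lemma ideal_frac_ideal (I : K -> Prop) : ideal E I -> nonzero_set I -> frac_ideal E I.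
Proof.
move=> [hI IE] hnz; split=> //; split=> //.
by exists 1; split=> //; split=> [|x hx]; [exact: oner_neq0 | rewrite mul1r; apply: IE].
Qed.

Lemma ideal_zero : ideal E (@zero_set K).
Proof. by split=> [|x ->] //; split=> //; split=> [x y -> ->|a x _ ->]; rewrite (addr0, mulr0). Qed.

Lemma t_ideal_v_closed (I J : K -> Prop) : is_t_ideal E I -> fg_frac_ideal E J ->
  subsetK J I -> subsetK (v_ideal E J) I.
Proof. by move=> [_ It] hJ JI x hx; apply/It; exists J. Qed.

(* [x] lies in the nonzero finitely generated [(z, x)], for any nonzero [z] of [I]. *)
Lemma sub_t_ideal_op (I : K -> Prop) : ideal E I -> nonzero_set I ->
  subsetK I (t_ideal_op E I).
Proof.
move=> hI [z [hz nz]] x hx.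
have [Isub IE] := hI.
have zxI : subsetK (span_of E [:: z; x]) I.
  by apply: span_of_min => // u; rewrite !inE => /orP [/eqP ->|/eqP ->].
exists (span_of E [:: z; x]); split; last split=> //.
  split; last by exists [:: z; x].
  apply: ideal_frac_ideal; first by split; [exact: span_of_submodule | move=> u /zxI /IE].
  by exists z; split=> //; apply: span_of_mem; exact: mem_head.
by apply: sub_v_ideal; apply: span_of_mem; rewrite !inE eqxx orbT.
Qed.

Lemma t_ideal_intro (I : K -> Prop) : ideal E I -> nonzero_set I ->
  (forall J, fg_frac_ideal E J -> subsetK J I -> subsetK (v_ideal E J) I) ->
  is_t_ideal E I.
Proof.
move=> hI hnz vI; split; first exact: ideal_frac_ideal.
by move=> x; split=> [[J [hJ [JI hx]]]|]; [apply: (vI J) | apply: sub_t_ideal_op].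
Qed.


Definition colon (M : K -> Prop) (b : K) : K -> Prop := fun x => E x /\ M (x * b).

Lemma colon_ideal M b : ideal E M -> ideal E (colon M b).
Proof.
move=> [[M0 [MD MM]] _]; split; last by move=> x [].
split; first by split=> //; rewrite mul0r.
split=> [x y [Ex Mx] [Ey My]|a x Ea [Ex Mx]]; split; first exact: ED.
- by rewrite mulrDl; apply: MD.
- exact: EM.
- by rewrite -mulrA; apply: MM.
Qed.

Lemma sub_colon M b : ideal E M -> E b -> subsetK M (colon M b).
Proof. by move=> [[_ [_ MM]] ME] Eb x Mx; split; [apply: ME | rewrite mulrC; apply: MM]. Qed.

(* [J <= M : b] gives [b J <= M], and [(b J)_v = b J_v]. *)
Lemma colon_t_ideal M b : ideal E M -> is_t_ideal E M -> E b -> b != 0 ->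
  is_t_ideal E (colon M b).
Proof.
move=> hM Mt Eb b_neq0; have [[M0 [MD MM]] ME] := hM.
have [z [Mz z_neq0]] : nonzero_set M by case: Mt => [[_ [h _]] _].
apply: t_ideal_intro; [exact: colon_ideal | by exists z; split=> //; apply: sub_colon |].
move=> J [[_ [[w [Jw w_neq0]] _]] [s Js]] J_colon x Jv_x.
have JE : subsetK J E by move=> u /J_colon [].
split; first exact: (v_ideal_integral JE Jv_x).
pose Jb := span_of E [seq u * b | u <- s].
have JbM : subsetK Jb M.
  apply: span_of_min; first by split.
  by move=> _ /mapP [u su ->]; apply: (proj2 (J_colon u _)); apply/Js; apply: span_of_mem.
apply: (t_ideal_v_closed Mt _ JbM).
  split; last by exists [seq u * b | u <- s].
  apply: ideal_frac_ideal; first by split; [exact: span_of_submodule | move=> u /JbM /ME].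
  by exists (w * b); split; [apply: span_of_mulr; apply/Js | rewrite mulf_neq0].
move=> y Jb_y; rewrite -mulrA; apply: Jv_x => u Ju.
by rewrite -mulrA mulrCA [b * u]mulrC; apply: Jb_y; apply: span_of_mulr; apply/Js.
Qed.

Lemma max_t_ideal_prime M : max_t_ideal E M -> prime_t_ideal E M.
Proof.
move=> [hM [Mp [Mt Mmax]]]; split=> //; split=> //; split=> // a b Ea Eb Mab.
have [Mb|Mb] := classic (M b); [by right | left].
have b_neq0 : b != 0 by apply/eqP => b0; apply: Mb; rewrite b0; case: hM => [[]].
have colon_proper : Defs.proper (colon M b) by move=> [_]; rewrite mul1r.
have colonM := Mmax _ (colon_ideal b hM) colon_proper (colon_t_ideal hM Mt Eb b_neq0)
  (sub_colon hM Eb).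
by apply/colonM; split.
Qed.

Section DirectedUnion.
Variables (I : Type) (A : I -> Prop) (F : I -> K -> Prop).
Hypothesis A_nonempty : exists i, A i.
Hypothesis F_directed : forall i j, A i -> A j ->
  exists k, A k /\ subsetK (F i) (F k) /\ subsetK (F j) (F k).
Hypothesis F_proper_t : forall i, A i -> proper_t_ideal (F i).

Let U : K -> Prop := fun x => exists i, A i /\ F i x.

Lemma directed_union_seq (s : seq K) : (forall z, z \in s -> U z) ->
  exists i, A i /\ forall z, z \in s -> F i z.
Proof.
elim: s => [|a s IH] sU; first by have [i Ai] := A_nonempty; exists i.
have [i [Ai Fia]] := sU a (mem_head _ _).
have [j [Aj Fjs]] : exists j, A j /\ forall z, z \in s -> F j z.
  by apply: IH => z sz; apply: sU; rewrite inE sz orbT.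
have [k [Ak [Fik Fjk]]] := F_directed Ai Aj.
by exists k; split=> // z; rewrite inE => /orP [/eqP ->|/Fjs /Fjk]; [apply: Fik|].
Qed.

Lemma directed_union_proper_t_ideal : proper_t_ideal U.
Proof.
have UE : subsetK U E by move=> x [i [Ai Fix]]; have [[_ h] _] := F_proper_t Ai; apply: h.
have hU : ideal E U.
  split=> //; split; first by have [i Ai] := A_nonempty; exists i; have [[[]]] := F_proper_t Ai.
  split=> [x y [i [Ai Fix]] [j [Aj Fjy]] | a x Ea [i [Ai Fix]]].
    have [k [Ak [Fik Fjk]]] := F_directed Ai Aj.
    have [[[_ [FkD _]] _] _] := F_proper_t Ak.
    by exists k; split=> //; apply: FkD; [apply: Fik | apply: Fjk].
  by exists i; split=> //; have [[[_ [_ FiM]] _] _] := F_proper_t Ai; apply: FiM.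
have [i0 Ai0] := A_nonempty.
have [_ [_ [[_ [[z [Fz z_neq0]] _]] _]]] := F_proper_t Ai0.
split=> //; split; first by move=> [i [Ai Fi1]]; have [_ [Fip _]] := F_proper_t Ai; apply: Fip.
apply: t_ideal_intro => //; first by exists z; split=> //; exists i0.
move=> J [hJ [s Js]] JU x Jv_x.
have [i [Ai Fis]] := directed_union_seq (fun z sz => JU z (proj2 (Js z) (span_of_mem sz))).
have [[hFi _] [_ Fit]] := F_proper_t Ai.
exists i; split=> //; apply: (t_ideal_v_closed Fit (conj hJ (ex_intro _ s Js)) _ Jv_x).
by move=> u /Js; apply: span_of_min; case: hFi.
Qed.

End DirectedUnion.

Lemma exists_max_t_ideal P : proper_t_ideal P -> exists M, max_t_ideal E M /\ subsetK P M.
Proof.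
move=> hP; pose above I := subsetK P I /\ proper_t_ideal I.
pose le (I J : {I | above I}) := `[< subsetK (sval I) (sval J) >].
have aboveP : above P by split=> // x.
have [||C totC|[M [PM hM]] Mmax] := ZL_preorder (exist _ P aboveP) (R := le).
- by move=> I; apply/asboolP.
- by move=> I J L /asboolP IJ /asboolP JL; apply/asboolP => x /IJ /JL.
- have [[I0 CI0]|C0] := classic (exists I, C I); last first.
    by exists (exist _ P aboveP) => I CI; case: C0; exists I.
  have C_directed I J : C I -> C J ->
      exists L, C L /\ subsetK (sval I) (sval L) /\ subsetK (sval J) (sval L).
    move=> CI CJ; have [/asboolP IJ|/asboolP JI] := totC I J CI CJ.
      by exists J; split=> //; split=> // x.
    by exists I; split=> //; split=> // x.
  have hU := directed_union_proper_t_ideal (ex_intro _ I0 CI0) C_directed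
    (fun I _ => proj2 (svalP I)).
  have PU : subsetK P (fun x => exists I, C I /\ sval I x).
    by move=> x Px; exists I0; split=> //; apply: (proj1 (svalP I0)).
  exists (exist above _ (conj PU hU)) => I CI.
  by apply/asboolP => x Ix; exists I.
- exists M; split=> //; have [Mid [Mp Mt]] := hM.
  split=> //; split=> //; split=> // N hN Np Nt MN.
  have aboveN : above N by split=> [x /PM /MN|].
  have /asboolP NM := Mmax (exist _ N aboveN) (asboolT MN).
  by move=> x; split=> [/NM|/MN].
Qed.

End Subring.

Section ChainTransfer.
Variables (K1 K2 : fieldType) (E1 : K1 -> Prop) (E2 : K2 -> Prop).
Variable F : (K1 -> Prop) -> (K2 -> Prop).
Hypotheses (E10 : E1 0) (E20 : E2 0) (E21 : E2 1).
Hypothesis E2D : forall x y, E2 x -> E2 y -> E2 (x + y).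
Hypothesis E2M : forall x y, E2 x -> E2 y -> E2 (x * y).
Hypothesis F_prime : forall P, prime_t_ideal E1 P -> prime_t_ideal E2 (F P).
Hypothesis F_mono : forall P Q, subsetK P Q -> subsetK (F P) (F Q).
Hypothesis F_reflect : forall P Q, ideal E1 P -> ideal E1 Q ->
  subsetK (F P) (F Q) -> subsetK P Q.
Hypothesis F_zero : forall P, eqsetK P (@zero_set K1) -> eqsetK (F P) (@zero_set K2).

Lemma t_chain_map P M n : t_chain E1 P n.+1 -> prime_t_ideal E2 M -> subsetK (F P) M ->
  t_chain E2 M n.+1.
Proof.
move=> [Q [<- [Qn [Qprime Qstrict]]]] hM FQ0M.
have Qideal i : (i <= n.+1)%N -> ideal E1 (Q i).
  rewrite leq_eqVlt => /orP [/eqP ->|/Qprime [[]] //].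
  suff -> : Q n.+1 = @zero_set K1 by apply: ideal_zero.
  by apply/funext => x; apply/propext; apply: Qn.
exists (fun i => if i == 0%N then M else F (Q i)); split=> //; split; first exact: F_zero.
split; first by case=> [|i] lt_i //=; apply: F_prime; apply: Qprime.
case=> [|i] lt_i /=; have [Q_sub Q_nsub] := Qstrict _ lt_i.
  split; first by move=> x /(F_mono Q_sub) /FQ0M.
  move=> MFQ1; apply: Q_nsub; apply: F_reflect; [exact: Qideal | exact: Qideal |].
  by move=> x /FQ0M /MFQ1.
split; first exact: F_mono.
by move=> FF; apply: Q_nsub; apply: F_reflect FF; apply: Qideal; rewrite // ltnW.
Qed.

Lemma tdim_le_of_prime_t_map : tdim_le E1 E2.
Proof.
move=> [|n] h; first by left.
case: h => [//|[M [_ chainM]]].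
have [[hFM [FMp _]] FMt] : prime_t_ideal E2 (F M).
  by case: chainM => Q [<- [_ [Qprime _]]]; apply: F_prime; apply: Qprime.
have [M' [maxM' FMM']] := exists_max_t_ideal E20 E21 E2D E2M (conj hFM (conj FMp FMt)).
right; exists M'; split=> //.
exact: t_chain_map chainM (max_t_ideal_prime E20 E21 E2D E2M maxM') FMM'.
Qed.

End ChainTransfer.

Lemma span_of_subring (K : fieldType) (E E' : K -> Prop) s :
  subsetK E E' -> subsetK (span_of E s) (span_of E' s).
Proof. by move=> EE' x [c [sz [Ec ->]]]; exists c; split=> //; split=> // i /Ec /EE'. Qed.

Lemma fraction_tofrac_div (T : idomainType) (x : {fraction T}) :
  exists a b : T, b != 0 /\ x = FracField.tofrac a / FracField.tofrac b.
Proof.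
elim/quotW: x => r; exists \n_r, \d_r; split; first exact: denom_ratioP.
have d_neq0 : FracField.tofrac \d_r != 0 by rewrite tofrac_eq0 denom_ratioP.
apply: (mulIf d_neq0); rewrite divfK //; unlock FracField.tofrac.
have -> : forall a b : {fraction T}, a * b = FracField.mul a b by [].
rewrite -FracField.pi_mul; apply/eqmodP.
rewrite /= FracField.equivfE /FracField.mulf.
by rewrite !numden_Ratio ?mulf_neq0 ?denom_ratioP ?oner_neq0 // !mulr1 mulrC.
Qed.

Lemma tofrac_div_eq (T : idomainType) (a b c d : T) : b != 0 -> d != 0 ->
  FracField.tofrac a / FracField.tofrac b = FracField.tofrac c / FracField.tofrac d ->
  a * d = c * b.
Proof. by move=> b0 d0 /eqP; rewrite eqr_div ?tofrac_eq0 // -!tofracM tofrac_eq => /eqP. Qed.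

Section PolyLocalization.
Context {D : idomainType}.
Local Notation tf := (@FracField.tofrac {poly D}).
Local Notation R := (@polyloc_A D).
Local Notation S := (@polyring_in_frac D).

Lemma setA_coef0 (g : {poly D}) : setA g -> g`_0 = 1.
Proof. by rewrite /setA horner_coef0. Qed.

Lemma setA_neq0 (g : {poly D}) : setA g -> g != 0.
Proof.
move=> /setA_coef0 g0; apply/eqP => g_eq0.
by move: g0; rewrite g_eq0 coef0 => /eqP; rewrite eq_sym oner_eq0.
Qed.

Lemma setA_tofrac_neq0 (g : {poly D}) : setA g -> tf g != 0.
Proof. by rewrite tofrac_eq0; apply: setA_neq0. Qed.

Lemma setA1 : setA (1 : {poly D}).
Proof. by rewrite /setA hornerC. Qed.

Lemma setAM (g h : {poly D}) : setA g -> setA h -> setA (g * h).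
Proof. by rewrite /setA hornerM => -> ->; rewrite mulr1. Qed.

Lemma polyring0 : S 0. Proof. by exists 0; rewrite tofrac0. Qed.
Lemma polyring1 : S 1. Proof. by exists 1; rewrite tofrac1. Qed.
Lemma polyringD x y : S x -> S y -> S (x + y).
Proof. by move=> [f ->] [g ->]; exists (f + g); rewrite tofracD. Qed.
Lemma polyringM x y : S x -> S y -> S (x * y).
Proof. by move=> [f ->] [g ->]; exists (f * g); rewrite tofracM. Qed.

Lemma polyloc_polyring x : S x -> R x.
Proof. by move=> [f ->]; exists f, 1; split; [exact: setA1 | rewrite tofrac1 divr1]. Qed.

Lemma polyloc0 : R 0. Proof. exact: polyloc_polyring polyring0. Qed.
Lemma polyloc1 : R 1. Proof. exact: polyloc_polyring polyring1. Qed.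

Lemma polylocD x y : R x -> R y -> R (x + y).
Proof.
move=> [f1 [g1 [Ag1 ->]]] [f2 [g2 [Ag2 ->]]].
exists (f1 * g2 + f2 * g1), (g1 * g2); split; first exact: setAM.
by rewrite addf_div ?setA_tofrac_neq0 // tofracD !tofracM.
Qed.

Lemma polylocM x y : R x -> R y -> R (x * y).
Proof.
move=> [f1 [g1 [Ag1 ->]]] [f2 [g2 [Ag2 ->]]].
by exists (f1 * f2), (g1 * g2); split; [exact: setAM | rewrite !tofracM mulf_div].
Qed.

Lemma polyloc_invA (g : {poly D}) : setA g -> R (tf g)^-1.
Proof. by move=> Ag; exists 1, g; rewrite tofrac1 div1r. Qed.

End PolyLocalization.

Section Contraction.
Variable D : idomainType.
Local Notation tf := (@FracField.tofrac {poly D}).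
Local Notation R := (@polyloc_A D).
Local Notation S := (@polyring_in_frac D).

Definition contract (Q : {fraction {poly D}} -> Prop) : {fraction {poly D}} -> Prop :=
  fun x => Q x /\ S x.

Lemma polyloc_common_denominator y (s : seq {fraction {poly D}}) :
  (forall x, x \in s -> R (y * x)) ->
  exists g, setA g /\ forall x, x \in s -> S (y * tf g * x).
Proof.
elim: s => [|a s IH] sR; first by exists 1; split=> //; exact: setA1.
have [g [Ag gs]] : exists g, setA g /\ forall x, x \in s -> S (y * tf g * x).
  by apply: IH => x sx; apply: sR; rewrite inE sx orbT.
have [f0 [g0 [Ag0 ya]]] := sR a (mem_head _ _).
exists (g * g0); split=> [|x]; first exact: setAM.
rewrite inE => /orP [/eqP ->|sx].
  exists (g * f0); rewrite !tofracM mulrAC mulrA mulrAC ya.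
  by rewrite divfK ?setA_tofrac_neq0 // mulrC.
by rewrite tofracM mulrA mulrAC; apply: polyringM; [apply: gs | exists g0].
Qed.

(* A common denominator [g] in [A] moves [(J D[X]_A)^{-1}] into [g^{-1} J^{-1}]. *)
Lemma v_ideal_polyring_polyloc s x :
  v_ideal S (span_of S s) x -> v_ideal R (span_of R s) x.
Proof.
move=> vx y Rinv_y.
have [g [Ag gs]] := polyloc_common_denominator
  (fun u su => Rinv_y u (span_of_mem polyloc0 polyloc1 su)).
have [p xyg] : S (x * (y * tf g)).
  by apply: vx; apply: (inv_ideal_span polyring0 polyringD polyringM) => u /gs.
by exists p, g; split=> //; rewrite -xyg mulrA mulfK ?setA_tofrac_neq0.
Qed.

Lemma contract_ideal Q : ideal R Q -> ideal S (contract Q).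
Proof.
move=> [[Q0 [QD QM]] _]; split; last by move=> x [].
split; first by split=> //; exact: polyring0.
split=> [x y [Qx Sx] [Qy Sy]|a x Sa [Qx Sx]]; split.
- exact: QD.
- exact: polyringD.
- by apply: QM => //; apply: polyloc_polyring.
- exact: polyringM.
Qed.

Lemma contract_t_ideal Q : ideal R Q -> is_t_ideal R Q -> is_t_ideal S (contract Q).
Proof.
move=> hQ Qt; have [[Q0 [QD QM]] QR] := hQ.
have [z [Qz z_neq0]] : nonzero_set Q by case: Qt => [[_ [h _]] _].
have [f [g [Ag z_fg]]] := QR z Qz.
apply: t_ideal_intro; [exact: polyring0 | exact: polyring1 | exact: polyringD |
  exact: polyringM | exact: contract_ideal |  |].
  exists (tf f); split; last by apply: contra z_neq0; rewrite z_fg => /eqP ->; rewrite mul0r.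
  split; last by exists f.
  rewrite -[tf f](divfK (setA_tofrac_neq0 Ag)) -z_fg mulrC.
  by apply: QM => //; apply: polyloc_polyring; exists g.
move=> J [[_ [[w [Jw w_neq0]] _]] [s Js]] JQ x Jv_x.
have JS : subsetK J S by move=> u /JQ [].
split; last exact: (v_ideal_integral JS Jv_x).
have sQ u : u \in s -> Q u.
  by move=> su; case: (JQ u (proj2 (Js u) (span_of_mem polyring0 polyring1 su))).
have JRQ : subsetK (span_of R s) Q by apply: span_of_min => //; split=> //; split.
apply: (t_ideal_v_closed Qt _ JRQ); last first.
  by apply: v_ideal_polyring_polyloc; move=> y hy; apply: Jv_x => u /Js; apply: hy.
split; last by exists s.
apply: ideal_frac_ideal; [exact: polyloc1 | |].
  split; [apply: span_of_submodule | by move=> u /JRQ /QR].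
- exact: polyloc0.
- exact: polylocD.
- exact: polylocM.
exists w; split=> //; apply: span_of_subring (proj1 (Js w) Jw).
exact: polyloc_polyring.
Qed.

Lemma contract_prime_t_ideal Q : prime_t_ideal R Q -> prime_t_ideal S (contract Q).
Proof.
move=> [[hQ [Qp Qprime]] Qt]; split; last exact: contract_t_ideal.
split; first exact: contract_ideal.
split=> [[]|a b Sa Sb [Qab _]] //.
by case: (Qprime a b (polyloc_polyring Sa) (polyloc_polyring Sb) Qab); [left | right].
Qed.

Lemma tdim_le_polyloc_polyring : tdim_le R S.
Proof.
apply: (@tdim_le_of_prime_t_map _ _ R S contract polyloc0 polyring0 polyring1
  polyringD polyringM contract_prime_t_ideal).
- by move=> P Q PQ x [Px Sx]; split=> //; apply: PQ.
- move=> P Q [[_ [_ PM]] PR] [[_ [_ QM]] _] PQ z Pz.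
  have [f [g [Ag z_fg]]] := PR z Pz.
  have f_gz : tf f = tf g * z by rewrite z_fg mulrC divfK ?setA_tofrac_neq0.
  have [Qf _] : contract Q (tf f).
    apply: PQ; split; last by exists f.
    by rewrite f_gz; apply: PM => //; apply: polyloc_polyring; exists g.
  by rewrite z_fg mulrC; apply: QM => //; apply: polyloc_invA.
- move=> P P0 x; split=> [[/P0]|->] //.
  by split; [apply/P0 | exact: polyring0].
Qed.

End Contraction.

Lemma tofrac_divM_eq (T : idomainType) (a b c d : T) : b != 0 ->
  FracField.tofrac a / FracField.tofrac b * FracField.tofrac c = FracField.tofrac d ->
  a * c = b * d.
Proof.
move=> b_neq0 abcd; rewrite [b * d]mulrC -[a * c]mulr1.
apply: (tofrac_div_eq b_neq0 (oner_neq0 T)).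
by rewrite tofracM mulrAC abcd tofrac1 divr1.
Qed.

Lemma polyC_dvd_coefs (T : idomainType) (a b : T) (f : {poly T}) :
  (forall k, exists d, a * f`_k = b * d) -> exists q, a%:P * f = b%:P * q.
Proof.
move=> dvd_abf.
have ex_d k : exists d, a * f`_k == b * d by have [d ->] := dvd_abf k; exists d.
exists (\poly_(k < size f) xchoose (ex_d k)); apply/polyP => k.
rewrite !coefCM coef_poly; case: ltnP => [_|le_f_k]; first exact/eqP/(xchooseP (ex_d k)).
by rewrite nth_default // !mulr0.
Qed.

(* Induction on [k]: the [k]-th coefficient of [u * g] is [u_k] plus a combination of
   [u_0, ..., u_(k-1)], because [g_0 = 1]. *)
Lemma dvd_coefs_mul_cancel (T : idomainType) (b : T) (u g r : {poly T}) :
  g`_0 = 1 -> u * g = b%:P * r -> forall k, exists d, u`_k = b * d.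
Proof.
move=> g0 ugbr k; elim/ltn_ind: k => k IH.
have := congr1 (fun p : {poly T} => p`_k) ugbr.
rewrite /= coefCM coefM big_ord_recr /= subnn g0 mulr1.
have [e ->] : exists e, \sum_(i < k) u`_(widen_ord (leqnSn k) i) * g`_(k - i) = b * e.
  apply: (big_ind (fun x => exists e, x = b * e)).
  - by exists 0; rewrite mulr0.
  - by move=> _ _ [e1 ->] [e2 ->]; exists (e1 + e2); rewrite mulrDr.
  - by move=> i _; have [d ->] := IH i (ltn_ord i); exists (d * g`_(k - i)); rewrite mulrA.
by move=> uk; exists (r`_k - e); rewrite mulrBr -uk addrC addrK.
Qed.

Section Extension.
Variable D : idomainType.
Local Notation K1 := {fraction D}.
Local Notation td := (@FracField.tofrac D).
Local Notation tf := (@FracField.tofrac {poly D}).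
Local Notation dom := (@dom_in_frac D).
Local Notation R := (@polyloc_A D).

Lemma dom_in_frac0 : dom 0. Proof. by exists 0; rewrite tofrac0. Qed.
Lemma dom_in_frac1 : dom 1. Proof. by exists 1; rewrite tofrac1. Qed.
Lemma dom_in_fracD x y : dom x -> dom y -> dom (x + y).
Proof. by move=> [a ->] [b ->]; exists (a + b); rewrite tofracD. Qed.
Lemma dom_in_fracM x y : dom x -> dom y -> dom (x * y).
Proof. by move=> [a ->] [b ->]; exists (a * b); rewrite tofracM. Qed.

Definition coefs_in (Q : K1 -> Prop) (f : {poly D}) := forall k, Q (td f`_k).

Definition extend (Q : K1 -> Prop) : {fraction {poly D}} -> Prop :=
  fun x => exists f g, coefs_in Q f /\ setA g /\ x = tf f / tf g.

Section CoefsIn.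
Variable Q : K1 -> Prop.
Hypothesis Qsub : Esubmodule dom Q.
Let Q0 : Q 0 := proj1 Qsub.
Let QD : forall x y, Q x -> Q y -> Q (x + y) := proj1 (proj2 Qsub).
Let QM : forall a x, dom a -> Q x -> Q (a * x) := proj2 (proj2 Qsub).

Let Q_mull (a b : D) : Q (td b) -> Q (td (a * b)).
Proof. by move=> Qb; rewrite tofracM; apply: QM => //; exists a. Qed.

Let Q_add (a b : D) : Q (td a) -> Q (td b) -> Q (td (a + b)).
Proof. by rewrite tofracD; apply: QD. Qed.

Let Q_sum n (F : 'I_n -> D) : (forall i, Q (td (F i))) -> Q (td (\sum_i F i)).
Proof. by move=> QF; apply: (big_ind (fun x => Q (td x))) => //; rewrite tofrac0. Qed.

Lemma coefs_in0 : coefs_in Q 0.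
Proof. by move=> k; rewrite coef0 tofrac0. Qed.

Lemma coefs_inD f g : coefs_in Q f -> coefs_in Q g -> coefs_in Q (f + g).
Proof. by move=> Qf Qg k; rewrite coefD; apply: Q_add. Qed.

Lemma coefs_inMl f g : coefs_in Q g -> coefs_in Q (f * g).
Proof. by move=> Qg k; rewrite coefM; apply: Q_sum => i; apply: Q_mull. Qed.

Lemma coefs_inMr f g : coefs_in Q f -> coefs_in Q (f * g).
Proof. by rewrite mulrC; apply: coefs_inMl. Qed.

Lemma coefs_inC c : Q (td c) -> coefs_in Q c%:P.
Proof. by move=> Qc k; rewrite coefC; case: eqP; rewrite ?tofrac0. Qed.

Lemma ex_last_coef_notin f : ~ coefs_in Q f ->
  exists i, ~ Q (td f`_i) /\ forall k, (i < k)%N -> Q (td f`_k).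
Proof.
move=> nQf; pose notQ k := `[< ~ Q (td f`_k) >].
have ex_notQ : exists k, notQ k.
  by apply: NNPP => nex; apply: nQf => k; apply: NNPP => nQk; apply: nex; exists k; apply/asboolP.
have notQ_size k : notQ k -> (k <= size f)%N.
  move=> /asboolP nQk; rewrite leqNgt; apply/negP => lt_f_k.
  by apply: nQk; rewrite nth_default ?tofrac0 // ltnW.
case: (ex_maxnP ex_notQ notQ_size) => i /asboolP nQi i_max.
exists i; split=> // k lt_ik; apply: NNPP => nQk.
by have := i_max k (asboolT nQk); rewrite leqNgt lt_ik.
Qed.

Hypothesis Qprime : forall a b, dom a -> dom b -> Q (a * b) -> Q a \/ Q b.

(* Gauss' argument: multiply the last coefficients of [f] and [g] outside [Q]. *)
Lemma coefs_in_prime f g : coefs_in Q (f * g) -> coefs_in Q f \/ coefs_in Q g.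
Proof.
move=> Qfg; apply: NNPP => nQ.
have [i [nQfi Qf_after]] := ex_last_coef_notin (fun Qf => nQ (or_introl Qf)).
have [j [nQgj Qg_after]] := ex_last_coef_notin (fun Qg => nQ (or_intror Qg)).
suff : Q (td (f`_i * g`_j)).
  by rewrite tofracM => /Qprime []; [exists f`_i | exists g`_j | |].
have lt_i_ij : (i < (i + j).+1)%N by rewrite ltnS leq_addr.
have := Qfg (i + j)%N; rewrite coefM (bigD1 (Ordinal lt_i_ij)) //= addKn.
set rest := \sum_(l < (i + j).+1 | l != Ordinal lt_i_ij) _.
have Qrest : Q (td rest).
  apply: (big_ind (fun x => Q (td x))); [by rewrite tofrac0 | exact: Q_add |].
  move=> l ne_l_i; case: (ltngtP l i) => [lt_li|lt_il|eq_li].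
  - by apply: Q_mull; apply: Qg_after; lia.
  - by rewrite mulrC; apply: Q_mull; apply: Qf_after.
  - by move: ne_l_i; rewrite -val_eqE /= eq_li eqxx.
move=> Qsum; rewrite -(addrK rest (f`_i * g`_j)); apply: Q_add => //.
by rewrite -mulN1r; apply: Q_mull.
Qed.

End CoefsIn.

Lemma extend_sub_polyloc Q : subsetK (extend Q) R.
Proof. by move=> x [f [g [_ [Ag ->]]]]; exists f, g. Qed.

Lemma extend_ideal Q : ideal dom Q -> ideal R (extend Q).
Proof.
move=> [Qsub _]; split; last exact: extend_sub_polyloc.
split.
  exists 0, 1; split; first exact: (coefs_in0 Qsub).
  by rewrite tofrac0 mul0r; split=> //; exact: setA1.
split=> [x y [f1 [g1 [Qf1 [Ag1 ->]]]] [f2 [g2 [Qf2 [Ag2 ->]]]] |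
         a x [f1 [g1 [Ag1 ->]]] [f2 [g2 [Qf2 [Ag2 ->]]]]].
  exists (f1 * g2 + f2 * g1), (g1 * g2).
  split; first by apply: (coefs_inD Qsub); apply: (coefs_inMr Qsub).
  split; first exact: setAM.
  by rewrite addf_div ?setA_tofrac_neq0 // tofracD !tofracM.
exists (f1 * f2), (g1 * g2); split; first exact: (coefs_inMl Qsub).
by split; [exact: setAM | rewrite !tofracM mulf_div].
Qed.

Lemma extend_nonzero Q : ideal dom Q -> nonzero_set Q -> nonzero_set (extend Q).
Proof.
move=> [Qsub QE] [z [Qz z_neq0]]; have [c zc] := QE z Qz.
exists (tf c%:P / tf 1); split.
  by exists c%:P, 1; split; [apply: (coefs_inC Qsub); rewrite -zc | split=> //; exact: setA1].
by rewrite tofrac1 divr1 tofrac_eq0 polyC_eq0 -tofrac_eq0 -zc.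
Qed.

Lemma extend_prime Q : prime_ideal dom Q -> prime_ideal R (extend Q).
Proof.
move=> [hQ [Qp Qprime]]; have [Qsub _] := hQ.
have Q_setA g : setA g -> ~ coefs_in Q g.
  by move=> /setA_coef0 g0 /(_ 0%N); rewrite g0 tofrac1.
split; first exact: extend_ideal.
split=> [[f [g [Qf [Ag fg1]]]] | a b [f1 [g1 [Ag1 ->]]] [f2 [g2 [Ag2 ->]]] [f [g [Qf [Ag e]]]]].
  have g_eq_f : g = f by apply/eqP; rewrite -tofrac_eq -[tf g]mul1r fg1 divfK ?setA_tofrac_neq0.
  by apply: (Q_setA g Ag); rewrite g_eq_f.
rewrite mulf_div -!tofracM in e.
have Qf12g : coefs_in Q (f1 * f2 * g).
  have g12_neq0 := mulf_neq0 (setA_neq0 Ag1) (setA_neq0 Ag2).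
  by rewrite (tofrac_div_eq g12_neq0 (setA_neq0 Ag) e); apply: (coefs_inMr Qsub).
have [Qf12|//] := coefs_in_prime Qsub Qprime Qf12g; last by move/Q_setA: Ag.
by case: (coefs_in_prime Qsub Qprime Qf12) => Qfi; [left; exists f1, g1 | right; exists f2, g2].
Qed.

Lemma extend_seq_repr Q (s : seq {fraction {poly D}}) : (forall u, u \in s -> extend Q u) ->
  exists fgs : seq ({poly D} * {poly D}),
    s = [seq tf p.1 / tf p.2 | p <- fgs] /\
    forall p, p \in fgs -> coefs_in Q p.1 /\ setA p.2.
Proof.
elim: s => [|a s IH] sQ; first by exists [::].
have [fgs [-> fgsQ]] := IH (fun u su => sQ u (mem_behead (s := a :: s) su)).
have [f [g [Qf [Ag ->]]]] := sQ a (mem_head _ _).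
by exists ((f, g) :: fgs); split=> // p; rewrite inE => /orP [/eqP ->|/fgsQ].
Qed.

Definition numer_coefs (fgs : seq ({poly D} * {poly D})) : seq K1 :=
  flatten [seq map td (polyseq p.1) | p <- fgs].

Section NumeratorCoefficients.
Variable fgs : seq ({poly D} * {poly D}).
Local Notation s := [seq tf p.1 / tf p.2 | p <- fgs].
Local Notation I := (span_of dom (numer_coefs fgs)).

Lemma mem_numer_coefs p k : p \in fgs -> (k < size p.1)%N -> td p.1`_k \in numer_coefs fgs.
Proof.
move=> fgs_p lt_k; apply/flattenP; exists (map td p.1); first by apply/mapP; exists p.
by apply: map_f; apply: mem_nth.
Qed.

Lemma numer_coefsP c : c \in numer_coefs fgs -> exists p k, p \in fgs /\ c = td p.1`_k.
Proof.
move=> /flattenP [_ /mapP [p fgs_p ->] /mapP [c' p_c' ->]].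
by exists p, (index c' p.1); rewrite nth_index.
Qed.

Lemma numer_coefs_sub Q : ideal dom Q -> (forall p, p \in fgs -> coefs_in Q p.1) ->
  subsetK I Q.
Proof.
move=> [Qsub _] fgsQ; apply: span_of_min => // c /numer_coefsP [p [k [fgs_p ->]]].
exact: fgsQ.
Qed.

Lemma numer_coefs_nonzero : nonzero_set (span_of R s) -> nonzero_set I.
Proof.
move=> [w [sw w_neq0]]; apply: NNPP => I0.
have cs0 c : c \in numer_coefs fgs -> c = 0.
  move=> cs_c; apply: NNPP => c_neq0; apply: I0; exists c.
  by split; [apply: span_of_mem dom_in_frac0 dom_in_frac1 _ _ cs_c | apply/eqP].
have fgs0 p : p \in fgs -> p.1 = 0.
  move=> fgs_p; apply: contraTeq isT => p1_neq0.
  have lt_last : ((size p.1).-1 < size p.1)%N by rewrite prednK // size_poly_gt0.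
  move/eqP: (cs0 _ (mem_numer_coefs fgs_p lt_last)).
  by rewrite tofrac_eq0 -lead_coefE lead_coef_eq0 (negbTE p1_neq0).
have s0 : subsetK (span_of R s) (@zero_set _).
  apply: (span_of_min (proj1 (ideal_zero polyloc0))).
  by move=> _ /mapP [p fgs_p ->]; rewrite (fgs0 p fgs_p) tofrac0 mul0r.
by move: w_neq0; rewrite (s0 w sw) eqxx.
Qed.

Hypothesis fgsA : forall p, p \in fgs -> setA p.2.

Lemma inv_numer_coefs (a b : D) : b != 0 -> inv_ideal dom I (td a / td b) ->
  inv_ideal R (span_of R s) (tf a%:P / tf b%:P).
Proof.
move=> b_neq0 Iinv_ab; apply: (inv_ideal_span polyloc0 polylocD polylocM).
move=> _ /mapP [p fgs_p ->].
have dvd_ap : forall k, exists d, a * p.1`_k = b * d.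
  move=> k; case: (ltnP k (size p.1)) => [lt_k|le_k]; last by exists 0; rewrite nth_default ?mulr0.
  have [d abd] := Iinv_ab _ (span_of_mem dom_in_frac0 dom_in_frac1 (mem_numer_coefs fgs_p lt_k)).
  by exists d; apply: tofrac_divM_eq.
have [q apbq] := polyC_dvd_coefs dvd_ap.
exists q, p.2; split; first exact: fgsA.
rewrite mulf_div -tofracM apbq tofracM -mulf_div divff ?mul1r //.
by rewrite tofrac_eq0 polyC_eq0.
Qed.

Lemma v_ideal_numer_coefs (h g : {poly D}) : setA g ->
  v_ideal R (span_of R s) (tf h / tf g) -> forall k, v_ideal dom I (td h`_k).
Proof.
move=> Ag v_hg k y Iinv_y.
have [a [b [b_neq0 y_ab]]] := fraction_tofrac_div y; rewrite y_ab in Iinv_y *.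
have [r [g' [Ag' e]]] := v_hg _ (inv_numer_coefs b_neq0 Iinv_y).
rewrite mulf_div -!tofracM in e.
have bP_neq0 : b%:P != 0 by rewrite polyC_eq0.
have e' := tofrac_div_eq (mulf_neq0 (setA_neq0 Ag) bP_neq0) (setA_neq0 Ag') e.
have [d hd] : exists d, (h * a%:P)`_k = b * d.
  apply: (dvd_coefs_mul_cancel (setA_coef0 Ag') (r := r * g)).
  by rewrite e' [g * _]mulrC mulrCA.
exists d; rewrite coefMC in hd.
by rewrite mulrA -tofracM hd tofracM mulrAC divff ?mul1r // tofrac_eq0.
Qed.

End NumeratorCoefficients.

Lemma extend_t_ideal Q : ideal dom Q -> is_t_ideal dom Q -> is_t_ideal R (extend Q).
Proof.
move=> hQ Qt; have [_ [Qnz _]] := Qt.1.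
apply: t_ideal_intro; [exact: polyloc0 | exact: polyloc1 | exact: polylocD | exact: polylocM |
  exact: extend_ideal | exact: extend_nonzero |].
move=> J [[_ [Jnz _]] [s Js]] JQ x Jv_x.
have vx : v_ideal R (span_of R s) x by move=> y Rinv_y; apply: Jv_x => u /Js; apply: Rinv_y.
have JR : subsetK J R by move=> u /JQ /extend_sub_polyloc.
have [h [g [Ag x_hg]]] := v_ideal_integral JR Jv_x; rewrite x_hg in vx *.
have sQ u : u \in s -> extend Q u.
  by move=> su; apply: JQ; apply/Js; apply: span_of_mem polyloc0 polyloc1 _ _ su.
have [fgs [s_fgs fgsQ]] := extend_seq_repr sQ.
rewrite s_fgs in vx Js.
have IQ := numer_coefs_sub hQ (fun p fgs_p => proj1 (fgsQ p fgs_p)).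
have hI : fg_frac_ideal dom (span_of dom (numer_coefs fgs)).
  split; last by exists (numer_coefs fgs).
  apply: ideal_frac_ideal; [exact: dom_in_frac1 | | apply: numer_coefs_nonzero].
    split; [apply: span_of_submodule | by move=> u /IQ /(proj2 hQ)].
    - exact: dom_in_frac0.
    - exact: dom_in_fracD.
    - exact: dom_in_fracM.
  have [w [Jw w_neq0]] := Jnz; exists w; split=> //; exact/Js.
exists h, g; split=> // k; apply: (t_ideal_v_closed Qt hI IQ).
by apply: (v_ideal_numer_coefs _ Ag vx) => p /fgsQ [].
Qed.

Lemma extend_prime_t_ideal Q : prime_t_ideal dom Q -> prime_t_ideal R (extend Q).
Proof.
move=> [hQ Qt]; split; first exact: extend_prime.
by apply: extend_t_ideal => //; case: hQ.
Qed.

Lemma tdim_le_dom_polyloc : tdim_le dom R.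
Proof.
apply: (@tdim_le_of_prime_t_map _ _ dom R extend dom_in_frac0 polyloc0 polyloc1
  polylocD polylocM extend_prime_t_ideal).
- by move=> P Q PQ x [f [g [Pf [Ag ->]]]]; exists f, g; split=> // k; apply: PQ.
- move=> P Q [Psub PE] _ PQ z Pz.
  have [d zd] := PE z Pz; rewrite zd in Pz *.
  have [f [g [Qf [Ag e]]]] : extend Q (tf d%:P / tf 1).
    by apply: PQ; exists d%:P, 1; split; [exact: (coefs_inC Psub) | split=> //; exact: setA1].
  have := congr1 (fun p : {poly D} => p`_0) (tofrac_div_eq (oner_neq0 _) (setA_neq0 Ag) e).
  by rewrite /= coefCM mulr1 setA_coef0 // mulr1 => ->.
- move=> P P0 x; split=> [[f [g [Pf [_ ->]]]]|->].
    suff -> : f = 0 by rewrite tofrac0 mul0r.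
    by apply/polyP => k; apply/eqP; rewrite coef0 -tofrac_eq0; apply/eqP/P0/Pf.
  exists 0, 1; split; first by move=> k; rewrite coef0 tofrac0; apply/P0.
  by split; [exact: setA1 | rewrite tofrac0 mul0r].
Qed.

End Extension.

Theorem mainTheorem14 (D : idomainType) :
  tdim_le (@dom_in_frac D) (@polyloc_A D) /\
  tdim_le (@polyloc_A D) (@polyring_in_frac D).
Proof. by split; [apply: tdim_le_dom_polyloc | apply: tdim_le_polyloc_polyring]. Qed.
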